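(* In every finite poset model $\mathcal{F}=(W,\preceq,\mathcal{V})$, the relation $\equiv_\eta$ on $W$ is a weak $\pm$-bisimulation.
   Context: Fix a set PL of proposition letters. A poset model is $\mathcal{F}=(W,\preceq,\mathcal{V})$ with $(W,\preceq)$ a partial order and $\mathcal{V}:\mathrm{PL}\to\mathcal{P}(W)$. $[m;n]=\{i\in\mathbb{N}:m\le i\le n\}$, $[m;n)=\{i:m\le i<n\}$. An undirected path of length $\ell$ from $w$ is $\pi:[0;\ell]\to W$ with $\pi(0)=w$ and, for each $i\in[0;\ell)$, $\pi(i)\preceq\pi(i+1)$ or $\pi(i+1)\preceq\pi(i)$. A $\downarrow$-path is an undirected path of length $\ell\ge1$ with $\pi(\ell)\preceq\pi(\ell-1)$. A $\pm$-path is a $\downarrow$-path of length $\ell\ge2$ with $\pi(0)\preceq\pi(1)$. SLCS$_\eta$ formulas: $\Phi::=p\mid\neg\Phi\mid\Phi_1\wedge\Phi_2\mid\eta(\Phi_1,\Phi_2)$; $w\models p$ iff $w\in\mathcal{V}(p)$; negation, conjunction standard; $w\models\eta(\Phi_1,\Phi_2)$ iff some $\pm$-path $\pi:[0;\ell]\to W$ from $w$ has $\pi(\ell)\models\Phi_2$ and $\pi(i)\models\Phi_1$ for all $i\in[0;\ell)$. $w_1\equiv_\eta w_2$ means $w_1,w_2$ satisfy the same SLCS$_\eta$ formulas. A weak $\pm$-bisimulation is a symmetric relation $B\subseteq W\times W$ such that whenever $B(w_1,w_2)$: (1) for every $p$, $w_1\in\mathcal{V}(p)$ iff $w_2\in\mathcal{V}(p)$;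 (2) for all $u_1,d_1\in W$ with ($w_1\preceq u_1$ or $u_1\preceq w_1$) and $d_1\preceq u_1$, there is a $\pm$-path $\pi_2:[0;\ell_2]\to W$ from $w_2$ with $B(d_1,\pi_2(\ell_2))$ and, for all $j\in[0;\ell_2)$, $B(w_1,\pi_2(j))$ or $B(u_1,\pi_2(j))$. *)

From mathcomp Require Import all_boot.
Set Implicit Arguments.
Unset Strict Implicit.
Unset Printing Implicit Defensive.

Definition is_partial_order (W : Type) (le : W -> W -> Prop) : Prop :=
  (forall w, le w w) /\
  (forall u v, le u v -> le v u -> u = v) /\
  (forall u v w, le u v -> le v w -> le u w).

Section Model.
Variables (PL : Type) (W : Type) (le : W -> W -> Prop) (V : PL -> W -> Prop).

(* An undirected path of length l from w: pi : nat -> W, only indices in [0;l] matter *)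
Definition undirected_path (pi : nat -> W) (l : nat) (w : W) : Prop :=
  pi 0 = w /\ forall i, i < l -> le (pi i) (pi i.+1) \/ le (pi i.+1) (pi i).

Definition down_path (pi : nat -> W) (l : nat) (w : W) : Prop :=
  undirected_path pi l w /\ 1 <= l /\ le (pi l) (pi l.-1).

Definition pm_path (pi : nat -> W) (l : nat) (w : W) : Prop :=
  down_path pi l w /\ 2 <= l /\ le (pi 0) (pi 1).

Inductive form : Type :=
  | FAtom : PL -> form
  | FNot : form -> form
  | FAnd : form -> form -> form
  | FEta : form -> form -> form.

Fixpoint sat (w : W) (f : form) {struct f} : Prop :=
  match f with
  | FAtom p => V p w
  | FNot g => ~ sat w g
  | FAnd g h => sat w g /\ sat w h
  | FEta g h => exists (pi : nat -> W) (l : nat),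
      pm_path pi l w /\ sat (pi l) h /\ forall i, i < l -> sat (pi i) g
  end.

Definition eta_equiv (w1 w2 : W) : Prop := forall f, sat w1 f <-> sat w2 f.

Definition weak_pm_bisim (B : W -> W -> Prop) : Prop :=
  (forall w1 w2, B w1 w2 -> B w2 w1) /\
  forall w1 w2, B w1 w2 ->
    (forall p, V p w1 <-> V p w2) /\
    (forall u1 d1, (le w1 u1 \/ le u1 w1) -> le d1 u1 ->
       exists (pi2 : nat -> W) (l2 : nat),
         pm_path pi2 l2 w2 /\ B d1 (pi2 l2) /\
         forall j, j < l2 -> B w1 (pi2 j) \/ B u1 (pi2 j)).
End Model.

(* Over a finite model every ≡η-class is defined by a single formula: conjoin, over
   the finitely many points outside the class, a formula separating them from it.
   Given w1 ≡η w2, a neighbour u1 of w1 and d1 ⪯ u1, let χ_w1, χ_u1, χ_d1 be the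
   characteristic formulas.  The ±-path w1, w1, u1, d1 witnesses
   η(χ_w1 ∨ χ_u1, χ_d1) at w1, hence at w2, and a path witnessing it at w2 is
   exactly what clause (2) of a weak ±-bisimulation asks for. *)
From Stdlib Require Import Classical.
From mathcomp Require Import all_boot.

Set Implicit Arguments.
Unset Strict Implicit.
Unset Printing Implicit Defensive.

Definition form_or (PL : Type) (a b : form PL) : form PL :=
  FNot (FAnd (FNot a) (FNot b)).

Section EtaEquivalence.
Variables (PL : Type) (W : eqType) (le : W -> W -> Prop) (V : PL -> W -> Prop).

Local Notation sat := (sat le V).
Local Notation eta_equiv := (eta_equiv le V).

Lemma eta_equiv_refl (x : W) : eta_equiv x x.
Proof. by []. Qed.

Lemma eta_equiv_sym (x y : W) : eta_equiv x y -> eta_equiv y x.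
Proof. by move=> E f; split => /(E f). Qed.

Lemma eta_equiv_of_empty_atoms (x y : W) : (PL -> False) -> eta_equiv x y.
Proof. by move=> noPL f; exfalso; elim: f. Qed.

Lemma sat_form_or (x : W) (a b : form PL) :
  sat x (form_or a b) <-> sat x a \/ sat x b.
Proof.
split=> /=; last tauto.
move=> Hab; apply: NNPP => Hn; apply: Hab; split=> ?; apply: Hn; by [left | right].
Qed.

Lemma separating_formula (x y : W) :
  ~ eta_equiv x y -> exists f, sat x f /\ ~ sat y f.
Proof.
move=> Hxy; apply: NNPP => Hn; apply: Hxy => f; split=> Hf; apply: NNPP => Hf'.
- by apply: Hn; exists f.
- by apply: Hn; exists (FNot f) => /=; tauto.
Qed.

(* [f0] only ensures that [form PL] is inhabited: it provides the empty conjunction. *)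
Lemma characteristic_formula_on (f0 : form PL) (x : W) (s : seq W) :
  exists chi, sat x chi /\ {in s, forall y, sat y chi -> eta_equiv x y}.
Proof.
elim: s => [|a s [chi [Hx Hs]]].
  by exists (FNot (FAnd f0 (FNot f0))); split=> //=; tauto.
case: (classic (eta_equiv x a)) => [Ea | /separating_formula [g [Hxg Hag]]].
  by exists chi; split=> // y; rewrite inE => /predU1P [-> | /Hs].
exists (FAnd chi g); split=> // y; rewrite inE => /predU1P [-> [_ /Hag] // | /Hs Hy].
by move=> [Hychi _]; apply: Hy.
Qed.

End EtaEquivalence.

Lemma characteristic_formula (PL : Type) (W : finType) (le : W -> W -> Prop)
    (V : PL -> W -> Prop) (f0 : form PL) (x : W) :
  exists chi, forall y, sat le V y chi <-> eta_equiv le V x y.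
Proof.
have [chi [Hx Hs]] := characteristic_formula_on le V f0 x (enum W).
exists chi => y; split; first by apply: Hs; rewrite mem_enum.
by move=> /(_ chi) [/(_ Hx)].
Qed.

Section Detour.
Variables (W : Type) (le : W -> W -> Prop).
Hypothesis le_refl : forall w, le w w.

Definition detour (w u d : W) : nat -> W :=
  fun i => match i with 0 | 1 => w | 2 => u | _ => d end.

Lemma pm_path_detour (w u d : W) :
  le w u \/ le u w -> le d u -> pm_path le (detour w u d) 3 w.
Proof.
move=> Hwu Hdu; do 2 split=> //; split=> // -[|[|[|i]]] // _.
- by left.
- by right.
Qed.

End Detour.

Theorem lemma13 (PL : Type) (W : finType) (le : W -> W -> Prop)
    (V : PL -> W -> Prop) :
  is_partial_order le ->
  weak_pm_bisim le V (eta_equiv le V).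
Proof.
move=> [le_refl _]; split; first exact: eta_equiv_sym.
move=> w1 w2 E; split; first by move=> p; exact: (E (FAtom p)).
move=> u1 d1 Hwu Hdu.
case: (classic (inhabited PL)) => [[p] | noPL]; last first.
  have Etriv x y : eta_equiv le V x y.
    by apply: eta_equiv_of_empty_atoms => q; apply: noPL.
  exists (detour w2 w2 w2), 3; split; first by apply: pm_path_detour => //; left.
  by split=> // j _; left.
have [c1 Hc1] := characteristic_formula le V (FAtom p) w1.
have [c2 Hc2] := characteristic_formula le V (FAtom p) u1.
have [c3 Hc3] := characteristic_formula le V (FAtom p) d1.
have Hw1 : sat le V w1 (FEta (form_or c1 c2) c3).
  exists (detour w1 u1 d1), 3; split; first exact: pm_path_detour le_refl _ _ _ Hwu Hdu.
  split; first exact/Hc3/eta_equiv_refl.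
  by move=> [|[|[|i]]] // _; apply/sat_form_or;
    [left; apply/Hc1 | left; apply/Hc1 | right; apply/Hc2].
have [pi [l [Hpi [Hl Hi]]]] := proj1 (E _) Hw1.
exists pi, l; split=> //; split; first exact/Hc3.
by move=> j /Hi /sat_form_or [/Hc1 | /Hc2]; [left | right].
Qed.
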